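(* Let $m,\Delta$ be positive integers and $X\subseteq\{-\Delta,\dots,\Delta\}^m$ such that $C=\mathrm{cone}(X)$ is pointed. Then there is a halfspace $H=\{x\in\mathbb{R}^m: d^{\mathsf T}x\ge 0\}$ with $C\cap H=\{\mathbf 0\}$, defined by some $d\in\mathbb{Z}^m$ with \[ \|d\|_\infty\le\Delta^m m^{m/2+1}. \]
   Context: $\mathrm{cone}(X)=\{\sum_{x\in X}\lambda_x x:\lambda_x\ge0\}$. A cone is pointed if $\mathbf 0$ is a vertex of it. *)

From mathcomp Require Import all_boot all_order all_algebra.
Set Implicit Arguments. Unset Strict Implicit. Unset Printing Implicit Defensive.
Import Order.TTheory GRing.Theory Num.Theory.
Local Open Scope ring_scope.

Definition intvec (R : numDomainType) (m : nat) (x : 'rV[int]_m) : 'rV[R]_m :=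
  map_mx (fun z : int => z%:~R) x.

Definition cone (R : numDomainType) (m : nat) (X : seq 'rV[int]_m)
  (v : 'rV[R]_m) : Prop :=
  exists lam : 'I_(size X) -> R,
    (forall i, 0 <= lam i) /\
    v = \sum_(i < size X) lam i *: intvec R (nth 0 X i).

Definition is_vertex (R : numDomainType) (m : nat) (C : 'rV[R]_m -> Prop)
  (p : 'rV[R]_m) : Prop :=
  C p /\
  forall (y z : 'rV[R]_m) (t : R), C y -> C z -> 0 < t -> t < 1 ->
    p = t *: y + (1 - t) *: z -> y = p /\ z = p.

Definition pointed (R : numDomainType) (m : nat) (C : 'rV[R]_m -> Prop) : Prop :=
  is_vertex C 0.

Definition dotZ (R : numDomainType) (m : nat) (d : 'rV[int]_m) (x : 'rV[R]_m) : R :=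
  \sum_(i < m) (d 0 i)%:~R * x 0 i.

From mathcomp Require Import all_boot all_order all_algebra.
From mathcomp Require Import algC spectral lra zify.
Import Order.TTheory GRing.Theory Num.Theory.
Set Implicit Arguments. Unset Strict Implicit. Unset Printing Implicit Defensive.
Local Open Scope ring_scope.

(* Since cone(X) is pointed, Gordan's alternative gives a real d with
   x . d < 0 for every nonzero x in X; rescaled, d lies in the polyhedron
   P = { d : x . d <= -1 for x in X, x <> 0 }.  Moving inside P along
   directions orthogonal to all tight constraints, where the coordinate
   hyperplanes d_j = 0 count as constraints too, raises the rank of the tight
   system until it is m.  There d solves M d = c for an invertible integer
   matrix M with entries in [-Delta, Delta] and c in {0, -1}^m, so by Cramer's
   rule |det M| d = +-adj(M) c is an integer vector defining the same
   halfspace.  Hadamard's inequality bounds every cofactor of M by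
   (sqrt(m) Delta)^(m-1), hence every entry by
   m (sqrt(m) Delta)^(m-1) <= Delta^m m^(m/2+1). *)

Section Hadamard.
Variable C : numClosedFieldType.
Local Open Scope sesquilinear_scope.

Lemma mulmx_trC_diag m n (B : 'M[C]_(m, n)) i :
  (B *m B ^t*) i i = \sum_j `|B i j| ^+ 2.
Proof. by rewrite mxE; apply: eq_bigr => j _; rewrite !mxE normCK. Qed.

(* Gram-Schmidt on the rows of A gives A = L Q with Q unitary and L lower
   triangular; L has the row norms of A and |det A| = prod_i |L i i|. *)
Lemma hadamard n (A : 'M[C]_n) :
  `|\det A| ^+ 2 <= \prod_i \sum_j `|A i j| ^+ 2.
Proof.
set Q := schmidt A.
have QQt : Q *m Q ^t* = 1%:M by apply/unitarymxP/schmidt_unitarymx.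
have QtQ : Q ^t* *m Q = 1%:M by exact: mulmx1C.
pose L := A *m Q ^t*.
have AL : A = L *m Q by rewrite /L -mulmxA QtQ mulmx1.
have L_trig : is_trig_mx L.
  apply/is_trig_mxP => i j ltij.
  have /sub_kermxP/rowP/(_ 0) : (row i A <= kermx ((row j Q) ^t*))%MS.
    apply: submx_trans (row_schmidt_sub A i) _; apply/sumsmx_subP => k le_ki.
    rewrite genmxE; apply/sub_kermxP/rowP => z.
    have /row_unitarymxP/(_ k j) := schmidt_unitarymx A (leqnn n).
    have -> : (k == j) = false by rewrite -val_eqE ltn_eqF ?(leq_ltn_trans le_ki).
    by rewrite dotmxE ord1 => Qkj; rewrite [RHS]mxE.
  by rewrite [RHS]mxE => <-; rewrite /L !mxE; apply: eq_bigr => l _; rewrite !mxE.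
have detQ : `|\det Q| ^+ 2 = 1.
  have := congr1 determinant QQt.
  by rewrite normCK det_mulmx det_map_mx det_tr det1.
have -> : `|\det A| ^+ 2 = \prod_i `|L i i| ^+ 2.
  by rewrite AL det_mulmx normrM exprMn detQ mulr1 det_trig // normr_prod prodrXl.
apply: ler_prod => i _; rewrite exprn_ge0 //= -!mulmx_trC_diag.
have -> : A *m A ^t* = L *m L ^t*.
  by rewrite {1 2}AL trmx_mul map_mxM mulmxA -(mulmxA L) QQt mulmx1.
rewrite mulmx_trC_diag (bigD1 i) //= lerDl sumr_ge0 // => j _; exact: exprn_ge0.
Qed.

End Hadamard.

Lemma hadamard_int n (A : 'M[int]_n) : \det A ^+ 2 <= \prod_i \sum_j A i j ^+ 2.
Proof.
have := hadamard (map_mx (intr : int -> algC) A).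
rewrite det_map_mx -intr_norm -rmorphXn /= -normrX ger0_norm ?sqr_ge0 //.
under eq_bigr => i _ do under eq_bigr => j _ do
  rewrite mxE -intr_norm -rmorphXn /= -normrX ger0_norm ?sqr_ge0 //.
have -> : \prod_i \sum_j ((A i j ^+ 2)%:~R : algC) = (\prod_i \sum_j A i j ^+ 2)%:~R.
  by rewrite rmorph_prod; apply: eq_bigr => i _; rewrite rmorph_sum.
by rewrite ler_int.
Qed.

Lemma norm_det_int_le (R : rcfType) n (D : nat) (A : 'M[int]_n) :
  (forall i j, `|A i j| <= D%:Z) ->
  (`|\det A|)%:~R <= (Num.sqrt (n%:R : R) * D%:R) ^+ n.
Proof.
move=> AD.
have row_le i : \sum_j A i j ^+ 2 <= D%:Z ^+ 2 *+ n.
  rewrite -[n in _ *+ n]card_ord -sumr_const; apply: ler_sum => j _.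
  by rewrite -real_normK ?num_real // lerXn2r ?nnegrE.
have det_le : \det A ^+ 2 <= (D%:Z ^+ 2 *+ n) ^+ n.
  apply: le_trans (hadamard_int A) _.
  rewrite -[n in _ ^+ n]card_ord -prodr_const; apply: ler_prod => i _.
  by rewrite row_le sumr_ge0 // => j _; exact: sqr_ge0.
rewrite -ler_sqr ?nnegrE ?ler0z ?exprn_ge0 ?mulr_ge0 ?sqrtr_ge0 //.
have -> : (Num.sqrt (n%:R : R) * D%:R) ^+ n ^+ 2 = ((D%:Z ^+ 2 *+ n) ^+ n)%:~R.
  have sq : (Num.sqrt (n%:R : R) * D%:R) ^+ 2 = n%:R * D%:R ^+ 2.
    by rewrite exprMn sqr_sqrtr ?ler0n.
  by rewrite -exprM mulnC exprM sq rmorphXn rmorphMn rmorphXn /= mulr_natl.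
by rewrite -rmorphXn /= real_normK ?num_real // ler_int.
Qed.

Section Dot.
Variables (R : realFieldType) (m : nat).
Implicit Types u v w : 'rV[R]_m.

Definition dot u v : R := \sum_i u 0 i * v 0 i.

Lemma dotC u v : dot u v = dot v u.
Proof. by apply: eq_bigr => i _; rewrite mulrC. Qed.

Lemma dotDl u v w : dot (u + v) w = dot u w + dot v w.
Proof. by rewrite /dot -big_split; apply: eq_bigr => i _; rewrite mxE mulrDl. Qed.

Lemma dotZl a u w : dot (a *: u) w = a * dot u w.
Proof. by rewrite /dot mulr_sumr; apply: eq_bigr => i _; rewrite mxE mulrA. Qed.

Lemma dotNl u w : dot (- u) w = - dot u w.
Proof. by rewrite -scaleN1r dotZl mulN1r. Qed.

Lemma dotBl u v w : dot (u - v) w = dot u w - dot v w.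
Proof. by rewrite dotDl dotNl. Qed.

Lemma dot0l w : dot 0 w = 0.
Proof. by rewrite -(scale0r 0) dotZl mul0r. Qed.

Lemma dotDr u v w : dot w (u + v) = dot w u + dot w v.
Proof. by rewrite !(dotC w) dotDl. Qed.

Lemma dotZr a u w : dot w (a *: u) = a * dot w u.
Proof. by rewrite !(dotC w) dotZl. Qed.

Lemma dotNr u w : dot w (- u) = - dot w u.
Proof. by rewrite !(dotC w) dotNl. Qed.

Lemma dot0r w : dot w 0 = 0.
Proof. by rewrite dotC dot0l. Qed.

Lemma dotDZr w u v a : dot w (u + a *: v) = dot w u + a * dot w v.
Proof. by rewrite dotDr dotZr. Qed.

Lemma dot_sumr I (r : seq I) (P : pred I) (F : I -> 'rV[R]_m) w :
  dot w (\sum_(i <- r | P i) F i) = \sum_(i <- r | P i) dot w (F i).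
Proof. by elim/big_rec2: _ => [|i y1 y2 _ <-]; rewrite ?dot0r ?dotDr. Qed.

Lemma dot_mulmx u v : dot u v = (u *m v^T) 0 0.
Proof. by rewrite mxE; apply: eq_bigr => i _; rewrite mxE. Qed.

Lemma dotvv_gt0 u : u != 0 -> 0 < dot u u.
Proof.
case/rV0Pn => j uj; rewrite /dot (bigD1 j) //= ltr_pwDl ?sumr_ge0 //.
  by rewrite lt_def mulf_neq0 //= -expr2 sqr_ge0.
by move=> i _; rewrite -expr2 sqr_ge0.
Qed.

End Dot.

Section Gordan.
Variables (R : realFieldType) (m : nat).
Implicit Types (x y d e : 'rV[R]_m) (xs ys : seq 'rV[R]_m).

Definition pointed_seq xs := forall lam : nat -> R, (forall i, 0 <= lam i) ->
  \sum_(i < size xs) lam i *: xs`_i = 0 ->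
  forall i, (i < size xs)%N -> lam i *: xs`_i = 0.

Lemma pointed_seq_cons x ys a (lam : nat -> R) :
  pointed_seq (x :: ys) -> 0 <= a -> (forall i, 0 <= lam i) ->
  a *: x + \sum_(i < size ys) lam i *: ys`_i = 0 ->
  a *: x = 0 /\ forall i, (i < size ys)%N -> lam i *: ys`_i = 0.
Proof.
move=> pxys a0 lam0 sum0.
have lam'0 i : 0 <= (if i is i'.+1 then lam i' else a) by case: i.
have := pxys _ lam'0; rewrite big_ord_recl => /(_ sum0) H.
by split=> [|i]; [exact: (H 0%N) | exact: (H i.+1)].
Qed.

Lemma pointed_seq_behead x ys : pointed_seq (x :: ys) -> pointed_seq ys.
Proof.
move=> pxys lam lam0 sum0.
by apply: (pointed_seq_cons pxys (lexx 0) lam0 _).2; rewrite scale0r add0r.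
Qed.

Lemma pointed_seq_pair x ys y a b :
  pointed_seq (x :: ys) -> y \in ys -> 0 <= a -> 0 <= b ->
  a *: x + b *: y = 0 -> a *: x = 0.
Proof.
move=> pxys yys a0 b0 sum0; pose k := index y ys.
have ltk : (k < size ys)%N by rewrite index_mem.
pose lam i := if i == k then b else 0.
apply: (pointed_seq_cons pxys a0 (lam := lam) _ _).1 => [i|].
  by rewrite /lam; case: eqP.
rewrite (bigD1 (Ordinal ltk)) //= big1 => [|i]; last first.
  by rewrite -val_eqE /= => /negPf ik; rewrite /lam ik scale0r.
by rewrite /lam eqxx nth_index // addr0.
Qed.

Lemma pointed_seq_proj x ys d :
  pointed_seq (x :: ys) -> x != 0 -> 0 <= dot d x ->
  (forall y, y \in ys -> dot d y <= 0) ->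
  pointed_seq [seq (- dot d y) *: x + dot d x *: y | y <- ys].
Proof.
move=> pxys x0 dx dys lam lam0; rewrite size_map => sum0 i lti.
have dyi j : (j < size ys)%N -> 0 <= - dot d ys`_j.
  by move=> ltj; rewrite oppr_ge0 dys ?mem_nth.
have [] := pointed_seq_cons (a := \sum_(j < size ys) lam j * - dot d ys`_j)
  (lam := fun j => lam j * dot d x) pxys.
- by apply: sumr_ge0 => j _; rewrite mulr_ge0 ?dyi.
- by move=> j; rewrite mulr_ge0.
- rewrite -[RHS]sum0 scaler_suml -big_split /=; apply: eq_bigr => j _.
  by rewrite (nth_map 0) // scalerDr !scalerA.
move=> /eqP; rewrite scaler_eq0 (negPf x0) orbF => /eqP/psumr_eq0P sum0' H.
have /(_ (Ordinal lti) isT) lamdy0 :=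
  sum0' (fun j _ => mulr_ge0 (lam0 j) (dyi j (ltn_ord j))).
by rewrite (nth_map 0) // scalerDr !scalerA lamdy0 scale0r add0r H.
Qed.

Lemma perturb_dot_lt0 ys e f :
  (forall y, y \in ys -> y != 0 -> dot e y < 0) ->
  exists2 eps, 0 < eps & forall y, y \in ys -> y != 0 -> dot (e + eps *: f) y < 0.
Proof.
move=> ey; suff [eps eps0 H] : exists2 eps, 0 < eps &
    forall eps', 0 < eps' -> eps' <= eps ->
    forall y, y \in ys -> y != 0 -> dot (e + eps' *: f) y < 0.
  by exists eps => //; apply: H.
elim: ys ey => [|y ys IH] ey; first by exists 1.
have [|eps1 eps1_gt0 H1] := IH; first by move=> z zys; apply: ey; rewrite inE zys orbT.
have [->|y0] := eqVneq y 0.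
  exists eps1 => // eps' ? ? z; rewrite inE => /orP[/eqP->|].
    by rewrite eqxx.
  exact: H1.
have eyl : dot e y < 0 by apply: ey; rewrite ?inE ?eqxx.
pose eps2 := - dot e y / (`|dot f y| + 1).
have eps2_gt0 : 0 < eps2 by rewrite divr_gt0 ?oppr_gt0 // ltr_wpDl.
exists (Order.min eps1 eps2) => [|eps' eps'0]; first by rewrite lt_min eps1_gt0.
rewrite le_min => /andP[le1 le2] z; rewrite inE => /orP[/eqP->|]; last exact: H1.
move=> _; rewrite dotDl dotZl.
have : eps' * dot f y < - dot e y.
  apply: le_lt_trans (ler_norm _) _; rewrite normrM (gtr0_norm eps'0).
  apply: (lt_le_trans (y := eps' * (`|dot f y| + 1))); first by rewrite ltr_pM2l // ltrDl.
  by rewrite -ler_pdivlMr // ltr_wpDl.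
lra.
Qed.

(* For
   xs = x :: ys with a separator d of ys and x . d >= 0, the vectors
   g y = (x . d) y - (y . d) x lie in d^perp and form a pointed family; a
   separator d' of them yields e = (x . d) d' - (x . d') d with e . y = d' . g y
   and e . x = 0, and e - eps x separates xs for small eps. *)
Lemma pointed_seq_separator xs :
  pointed_seq xs -> exists d, forall x, x \in xs -> x != 0 -> dot d x < 0.
Proof.
have [n] := ubnP (size xs); elim: n xs => // n IH [|x ys] /= szn pxys.
  by exists 0.
have [d dys] := IH ys szn (pointed_seq_behead pxys).
have dys_le y : y \in ys -> dot d y <= 0.
  by move=> yys; have [->|/(dys _ yys)/ltW] := eqVneq y 0; rewrite ?dot0r.
have [->|x0] := eqVneq x 0.
  by exists d => z; rewrite inE => /orP[/eqP->|]; [rewrite eqxx | exact: dys].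
have [dx|dx] := ltP (dot d x) 0.
  by exists d => z; rewrite inE => /orP[/eqP->|] //; exact: dys.
pose g y := (- dot d y) *: x + dot d x *: y.
have [d' d'g] : exists d', forall y, y \in ys -> g y != 0 -> dot d' (g y) < 0.
  have [||d' H] := IH [seq g y | y <- ys]; first by rewrite size_map.
    exact: pointed_seq_proj.
  by exists d' => y yys; apply: H; exact: map_f.
have gy0 y : y \in ys -> y != 0 -> g y != 0.
  move=> yys y0; apply: contraTneq (dys y yys y0) => gy; rewrite -leNgt.
  have dy_ge0 : 0 <= - dot d y by rewrite oppr_ge0 dys_le.
  have /eqP := pointed_seq_pair pxys yys dy_ge0 dx gy.
  by rewrite scaler_eq0 (negPf x0) orbF oppr_eq0 => /eqP->.
pose e := dot d x *: d' - dot d' x *: d.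
have ex : dot e x = 0 by rewrite dotBl !dotZl mulrC subrr.
have ey y : y \in ys -> y != 0 -> dot e y < 0.
  move=> yys y0; have := d'g y yys (gy0 y yys y0).
  rewrite dotBl !dotZl dotDr !dotZr (dotC d' x) (dotC d x) (dotC d' y) (dotC d y).
  by move=> h; nra.
have [eps eps0 Heps] := perturb_dot_lt0 (- x) ey.
exists (e + eps *: - x) => z; rewrite inE => /orP[/eqP-> _|]; last exact: Heps.
by rewrite dotDl dotZl dotNl ex add0r mulrN oppr_lt0 mulr_gt0 ?dotvv_gt0.
Qed.

End Gordan.

Section VertexWalk.
Variables (R : realFieldType) (m n : nat) (A : 'M[R]_(n, m)) (b : 'I_n -> R).
Variable S : pred 'I_n.
Hypothesis A_full : row_full A.
Implicit Types d u : 'rV[R]_m.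

Definition feasible d := forall i, S i -> dot (row i A) d <= b i.

Definition tight d i := dot (row i A) d == b i.

Definition tight_rows d : 'M[R]_(n, m) :=
  \matrix_(i, j) if tight d i then A i j else 0.

Lemma row_tight_rows d i : row i (tight_rows d) = if tight d i then row i A else 0.
Proof. by apply/rowP => j; rewrite !mxE; case: ifP; rewrite ?mxE. Qed.

Lemma exists_dot_row_neq0 u : u != 0 -> exists i, dot (row i A) u != 0.
Proof.
move=> u0; apply/existsP; apply: contraNT u0; rewrite negb_exists => /forallP Au0.
have /row_fullP[B BA] := A_full.
have Au : A *m u^T = 0.
  by apply/colP => i; have /negPn/eqP := Au0 i; rewrite dot_mulmx -row_mul !mxE.
by rewrite -[u]trmxK -[u^T]mul1mx -BA -mulmxA Au mulmx0 trmx0.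
Qed.

Lemma exists_tight_orth d : (\rank (tight_rows d) < m)%N ->
  exists2 u, u != 0 & forall i, tight d i -> dot (row i A) u = 0.
Proof.
move=> lt_rk; have [u uK u0] :
    exists2 u : 'rV[R]_m, (u <= kermx (tight_rows d)^T)%MS & u != 0.
  by apply/rowV0Pn; rewrite -mxrank_eq0 mxrank_ker mxrank_tr -lt0n subn_gt0.
exists u => // i ti; move/sub_kermxP: uK => /rowP/(_ i).
rewrite dotC dot_mulmx [RHS]mxE => <-.
by rewrite !mxE; apply: eq_bigr => j _; rewrite !mxE ti.
Qed.

(* The moves along u fix every tight row, and the new tight row i is not
   orthogonal to u, hence not in the span of the old ones. *)
Lemma rank_tight_rows_lt d u t i :
  (forall k, tight d k -> dot (row k A) u = 0) ->
  tight (d + t *: u) i -> dot (row i A) u != 0 ->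
  (\rank (tight_rows d) < \rank (tight_rows (d + t *: u)))%N.
Proof.
move=> uo ti ui.
suff : (tight_rows d < tight_rows (d + t *: u))%MS by rewrite ltmxErank => /andP[].
rewrite ltmxE; apply/andP; split.
  apply/row_subP => k; rewrite row_tight_rows; case: ifP => tk; last exact: sub0mx.
  have tk' : tight (d + t *: u) k by rewrite /tight dotDZr uo // mulr0 addr0.
  by have := row_sub k (tight_rows (d + t *: u)); rewrite row_tight_rows tk'.
apply: contra ui => /row_subP/(_ i); rewrite row_tight_rows ti => /submxP[D ->].
have Tu : tight_rows d *m u^T = 0.
  apply/colP => k; have : dot (row k (tight_rows d)) u = 0.
    by rewrite row_tight_rows; case: ifP => tk; rewrite ?uo ?dot0l.
  by rewrite dot_mulmx -row_mul !mxE.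
by rewrite dot_mulmx -mulmxA Tu mulmx0 mxE.
Qed.

Lemma ratio_test d u k : feasible d -> S k -> 0 < dot (row k A) u ->
  exists t i, [/\ feasible (d + t *: u), tight (d + t *: u) i & dot (row i A) u != 0].
Proof.
move=> fd Sk uk.
pose F i := (b i - dot (row i A) d) / dot (row i A) u.
have [i /andP[Si ui] Fi] := arg_minP F (P := fun i => S i && (0 < dot (row i A) u))
  (introT andP (conj Sk uk)).
exists (F i), i; split; last exact: lt0r_neq0.
- move=> j Sj; rewrite dotDZr; have := fd j Sj.
  have [uj|uj] := ltP 0 (dot (row j A) u).
    by have := Fi j (introT andP (conj Sj uj)); rewrite ler_pdivlMr // => h1 h2; lra.
  have : F i * dot (row j A) u <= 0.
    by rewrite mulr_ge0_le0 // divr_ge0 ?subr_ge0 ?fd // ltW.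
  lra.
- by rewrite /tight dotDZr divfK ?lt0r_neq0 // addrC subrK.
Qed.

Lemma feasible_step d : feasible d -> (\rank (tight_rows d) < m)%N ->
  exists2 d', feasible d' & (\rank (tight_rows d) < \rank (tight_rows d'))%N.
Proof.
move=> fd lt_rk; have [u u0 uo] := exists_tight_orth lt_rk.
suff [t [i [fd' ti ui]]] : exists t i,
    [/\ feasible (d + t *: u), tight (d + t *: u) i & dot (row i A) u != 0].
  by exists (d + t *: u) => //; exact: rank_tight_rows_lt ti ui.
have [/existsP[k /andP[Sk uk]] | S_orth] :=
  boolP [exists k, S k && (dot (row k A) u != 0)].
  have [uk_gt|uk_lt] := ltP 0 (dot (row k A) u); first exact: ratio_test uk_gt.
  have [|t [i [fd' ti ui]]] := @ratio_test d (- u) k fd Sk.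
    by rewrite dotNr oppr_gt0 lt_neqAle uk.
  by exists (- t), i; rewrite scaleNr -scalerN -oppr_eq0 -dotNr.
have [i ui] := exists_dot_row_neq0 u0.
exists ((b i - dot (row i A) d) / dot (row i A) u), i; split => //.
  move=> j Sj; rewrite dotDZr; move: S_orth; rewrite negb_exists => /forallP/(_ j).
  by rewrite Sj negbK => /eqP->; rewrite mulr0 addr0 fd.
by rewrite /tight dotDZr divfK // addrC subrK.
Qed.

Lemma exists_feasible_vertex d : feasible d ->
  exists d' (f : 'I_m -> 'I_n), [/\ feasible d', rowsub f A \in unitmx
    & rowsub f A *m d'^T = \col_k b (f k)].
Proof.
move=> fd; have [d' fd' full] : exists2 d', feasible d' & row_full (tight_rows d').
  have [k] := ubnP (m - \rank (tight_rows d)); elim: k d fd => // k IH d fd lek.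
  have [lt_rk|ge_rk] := ltnP (\rank (tight_rows d)) m.
    have [d2 fd2 lt2] := feasible_step fd lt_rk; apply: IH fd2 _; lia.
  by exists d => //; rewrite /row_full eqn_leq rank_leq_col.
pose f := fullrankfun full.
have tf k : tight d' (f k).
  apply: contraTT (fullrowsub_unit full) => nk.
  rewrite unitmxE unitfE negbK (expand_det_row _ k) big1 // => j _.
  by rewrite !mxE (negPf nk) mul0r.
exists d', f; split => //.
  rewrite -(_ : rowsub f (tight_rows d') = rowsub f A) ?fullrowsub_unit //.
  by apply/matrixP => k j; rewrite !mxE tf.
apply/colP => k; rewrite [RHS]mxE; have /eqP <- := tf k.
by rewrite !mxE; apply: eq_bigr => j _; rewrite !mxE.
Qed.

End VertexWalk.

(* For invertible M, this is |det M| M^-1 c, by Cramer's rule. *)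
Definition scaled_cramer m (M : 'M[int]_m) (c : 'cV[int]_m) : 'rV[int]_m :=
  (Num.sg (\det M) *: (\adj M *m c))^T.

Lemma intvec_scaled_cramer (R : numDomainType) m (M : 'M[int]_m) c (d : 'rV[R]_m) :
  map_mx intr M *m d^T = map_mx intr c ->
  intvec R (scaled_cramer M c) = (`|\det M|)%:~R *: d.
Proof.
move=> Mdc; have : (\det M)%:~R *: d^T = map_mx intr (\adj M *m c) :> 'cV[R]_m.
  by rewrite map_mxM map_mx_adj -Mdc mulmxA mul_adj_mx -det_map_mx mul_scalar_mx.
move=> /matrixP detd; apply/rowP => j; have := detd j 0.
by rewrite !mxE intrM => <-; rewrite mulrA -intrM -normrEsg.
Qed.

Lemma norm_adj_int_le (R : rcfType) m (D : nat) (M : 'M[int]_m) j k :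
  (forall i l, `|M i l| <= D%:Z) ->
  (`|\adj M j k|)%:~R <= (Num.sqrt (m%:R : R) * D%:R) ^+ m.-1.
Proof.
move=> MD; rewrite mxE /cofactor normrM normrX normrN1 expr1n mul1r.
apply: le_trans (norm_det_int_le _ _) _ => [i l|]; first by rewrite !mxE.
rewrite lerXn2r ?nnegrE ?mulr_ge0 ?sqrtr_ge0 //.
by rewrite ler_wpM2r // ler_sqrt // ler_nat leq_pred.
Qed.

Lemma norm_scaled_cramer_le (R : rcfType) m (D : nat) (M : 'M[int]_m) (c : 'cV[int]_m) j :
  (forall i l, `|M i l| <= D%:Z) -> (forall k, `|c k 0| <= 1) ->
  (`|scaled_cramer M c 0 j|)%:~R <= m%:R * (Num.sqrt (m%:R : R) * D%:R) ^+ m.-1.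
Proof.
move=> MD c1; rewrite !mxE normrM.
apply: le_trans (_ : (`|\sum_k \adj M j k * c k 0|)%:~R <= _).
  by rewrite ler_int ler_piMl // normr_sg; case: eqP.
rewrite mulr_natl -[m in _ *+ m]card_ord -sumr_const.
apply: le_trans (_ : (\sum_k `|\adj M j k|)%:~R <= _).
  rewrite ler_int; apply: le_trans (ler_norm_sum _ _ _) _; apply: ler_sum => k _.
  by rewrite normrM ler_piMr.
by rewrite rmorph_sum; apply: ler_sum => k _; apply: norm_adj_int_le.
Qed.

Section Cone.
Variables (R : realFieldType) (m : nat) (X : seq 'rV[int]_m).
Local Notation C := (@cone R m X).

Lemma intvec0 : intvec R (0 : 'rV[int]_m) = 0.
Proof. by apply/rowP => j; rewrite !mxE. Qed.

Lemma intvec_eq0 (x : 'rV[int]_m) : (intvec R x == 0) = (x == 0).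
Proof.
apply/eqP/eqP => [/rowP x0|->]; last exact: intvec0.
by apply/rowP => j; have /eqP := x0 j; rewrite !mxE intr_eq0 => /eqP.
Qed.

Lemma dotZE (d : 'rV[int]_m) (v : 'rV[R]_m) : dotZ d v = dot (intvec R d) v.
Proof. by apply: eq_bigr => i _; rewrite mxE. Qed.

Lemma cone_sum (lam : 'I_(size X) -> R) (P : pred 'I_(size X)) :
  (forall i, 0 <= lam i) -> C (\sum_(i | P i) lam i *: intvec R X`_i).
Proof.
move=> lam0; exists (fun i => if P i then lam i else 0); split.
  by move=> i; case: ifP.
by rewrite big_mkcond; apply: eq_bigr => i _; case: ifP; rewrite ?scale0r.
Qed.

Lemma coneZ a v : 0 <= a -> C v -> C (a *: v).
Proof.
move=> a0 [lam [lam0 ->]]; exists (fun i => a * lam i); split.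
  by move=> i; rewrite mulr_ge0.
by rewrite scaler_sumr; apply: eq_bigr => i _; rewrite scalerA.
Qed.

Lemma pointed_cone_add_eq0 y z : pointed C ->
  C y -> C z -> y + z = 0 -> y = 0.
Proof.
move=> [_ pt] Cy Cz yz0.
have half : (1 - 2^-1 : R) = 2^-1 by rewrite {1}(splitr 1) mul1r addrK.
have C2 v : C v -> C (2 *: v) by apply: coneZ.
have t0 : (0 : R) < 2^-1 by lra.
have t1 : (2^-1 : R) < 1 by lra.
have e0 : 0 = 2^-1 *: (2 *: y) + (1 - 2^-1) *: (2 *: z).
  by rewrite half !scalerA mulVf ?pnatr_eq0 // !scale1r.
have [/eqP + _] := pt _ _ _ (C2 y Cy) (C2 z Cz) t0 t1 e0.
by rewrite scaler_eq0 pnatr_eq0 => /eqP.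
Qed.

Lemma pointed_cone_seq : pointed C -> pointed_seq [seq intvec R x | x <- X].
Proof.
move=> pt lam lam0; rewrite size_map => sum0 i lti; rewrite (nth_map 0) //.
pose i0 := Ordinal lti.
apply: (pointed_cone_add_eq0 pt (y := lam i0 *: intvec R X`_i0)).
- apply: coneZ => //.
  by have := @cone_sum (fun=> 1) (pred1 i0); rewrite big_pred1_eq scale1r; apply.
- exact: (@cone_sum (fun j => lam j) (predC1 i0)).
rewrite -[RHS]sum0 [RHS](bigD1 i0) //= (nth_map 0) //; congr (_ + _).
by apply: eq_big => // j _; rewrite (nth_map 0).
Qed.

Lemma cone_halfspace (d : 'rV[int]_m) :
  (forall x, x \in X -> x != 0 -> dot (intvec R d) (intvec R x) < 0) ->
  forall v, C v /\ 0 <= dotZ d v <-> v = 0.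
Proof.
move=> dX v; split => [[[lam [lam0 ->]]]|->]; last first.
  split; last by rewrite dotZE dot0r.
  by have := @cone_sum (fun=> 0) pred0 (fun=> lexx 0); rewrite big_pred0.
rewrite dotZE dot_sumr => sum_ge0.
have dxi (i : 'I_(size X)) : X`_i != 0 -> dot (intvec R d) (intvec R X`_i) < 0.
  by apply: dX; rewrite mem_nth.
have term_le0 (i : 'I_(size X)) : 0 <= - dot (intvec R d) (lam i *: intvec R X`_i).
  rewrite dotZr oppr_ge0; have [->|/dxi/ltW] := eqVneq X`_i 0.
    by rewrite intvec0 dot0r mulr0.
  exact: mulr_ge0_le0.
have /psumr_eq0P term0 : \sum_i - dot (intvec R d) (lam i *: intvec R X`_i) = 0.
  by apply/eqP; rewrite eq_le sumr_ge0 // andbT sumrN oppr_le0.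
apply: big1 => i _; have [xi0|/dxi xi_lt0] := eqVneq X`_i 0.
  by rewrite xi0 intvec0 scaler0.
have /eqP := term0 (fun j _ => term_le0 j) i isT.
by rewrite oppr_eq0 dotZr mulf_eq0 (lt_eqF xi_lt0) orbF => /eqP->; rewrite scale0r.
Qed.

(* [s] bounds every [|d . x|^-1]; the zero vectors contribute [0^-1 = 0]. *)
Lemma exists_feasible_separator : pointed C ->
  exists d : 'rV[R]_m, forall x, x \in X -> x != 0 -> dot (intvec R x) d <= -1.
Proof.
move=> /pointed_cone_seq/pointed_seq_separator[d dX].
pose s := \sum_(i < size X) `|dot d (intvec R X`_i)|^-1.
exists (s *: d) => x xX x0; have ltk : (index x X < size X)%N by rewrite index_mem.
have dx : dot d (intvec R x) < 0 by rewrite dX ?map_f ?intvec_eq0.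
have le_s : `|dot d (intvec R x)|^-1 <= s.
  rewrite /s (bigD1 (Ordinal ltk)) //= nth_index // lerDl.
  by apply: sumr_ge0 => i _; rewrite invr_ge0.
have -> : -1 = `|dot d (intvec R x)|^-1 * dot d (intvec R x).
  by rewrite ltr0_norm // invrN mulNr mulVf ?ltr0_neq0.
by rewrite dotC dotZl ler_nM2r.
Qed.

End Cone.

Section ConeSystem.
Variables (m : nat) (X : seq 'rV[int]_m).

(* Rows x of X with right-hand side -1, imposed when x <> 0, on top of the
   unit rows with right-hand side 0, never imposed. *)
Definition cone_rows : 'M[int]_(size X + m, m) := col_mx (\matrix_(k < size X) X`_k) 1%:M.
Definition cone_rhs (i : 'I_(size X + m)) : int := if split i is inl _ then -1 else 0.
Definition cone_ineq (i : 'I_(size X + m)) : bool :=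
  if split i is inl k then X`_k != 0 else false.

Lemma row_full_cone_rows (R : fieldType) :
  row_full (map_mx intr cone_rows : 'M[R]_(_, m)).
Proof. by rewrite map_col_mx map_mx1 -sub1mx -addsmxE addsmxSr. Qed.

Lemma feasible_cone_rowsE (R : realFieldType) (d : 'rV[R]_m) :
  feasible (map_mx intr cone_rows) (fun i => (cone_rhs i)%:~R) cone_ineq d <->
  forall x, x \in X -> x != 0 -> dot (intvec R x) d <= -1.
Proof.
split=> [fd x xX x0 | fd i].
  have ltk : (index x X < size X)%N by rewrite index_mem.
  have := fd (lshift m (Ordinal ltk)).
  rewrite /cone_ineq /cone_rhs (unsplitK (inl _ (Ordinal ltk))) /=.
  by rewrite -map_row rowKu rowK nth_index // rmorphN1; apply.
rewrite /cone_ineq /cone_rhs; case: split_ordP => // k -> xk0.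
by rewrite -map_row rowKu rowK rmorphN1 fd ?mem_nth.
Qed.

Lemma cone_rows_le (D : nat) : (0 < D)%N ->
  (forall x, x \in X -> forall j, `|x 0 j| <= D%:Z) ->
  forall i j, `|cone_rows i j| <= D%:Z.
Proof.
move=> D0 XD i j; case: (split_ordP i) => k ->.
  by rewrite col_mxEu mxE XD ?mem_nth.
by rewrite col_mxEd mxE; case: (k == j); rewrite ?normr0 ?normr1 ?ler1n.
Qed.

Lemma cone_rhs_le1 i : `|cone_rhs i| <= 1.
Proof. by rewrite /cone_rhs; case: split. Qed.

End ConeSystem.

Lemma sqrt_bound_le (R : rcfType) (m D : nat) : (0 < m)%N -> (0 < D)%N ->
  m%:R * (Num.sqrt (m%:R : R) * D%:R) ^+ m.-1 <=
  (D%:R : R) ^+ m * (Num.sqrt (m%:R : R)) ^+ m * m%:R.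
Proof.
move=> m0 D0; rewrite [X in _ <= X]mulrC -exprMn (mulrC (D%:R : R)).
apply: ler_wpM2l => //; apply: ler_weXn2l; last exact: leq_pred.
rewrite -[X in X <= _]mulr1; apply: ler_pM; rewrite ?ler01 ?ler1n //.
by rewrite -[X in X <= _]sqrtr1 ler_sqrt ?ler1n.
Qed.

Theorem lemma10 (R : rcfType) (m Delta : nat) (X : seq 'rV[int]_m) :
  (0 < m)%N -> (0 < Delta)%N ->
  (forall x, x \in X -> forall i, `|x 0 i| <= Delta%:Z) ->
  pointed (@cone R m X) ->
  exists d : 'rV[int]_m,
    (forall v : 'rV[R]_m, (@cone R m X v /\ 0 <= dotZ d v) <-> v = 0) /\
    (forall i, (`|d 0 i|)%:~R <=
       (Delta%:R : R) ^+ m * (Num.sqrt (m%:R : R)) ^+ m * m%:R).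
Proof.
move=> m0 D0 XD pt.
have [d0 /feasible_cone_rowsE fd0] := exists_feasible_separator pt.
have [d [f [/feasible_cone_rowsE fd M_unit Md]]] :=
  exists_feasible_vertex (row_full_cone_rows X R) fd0.
pose M := rowsub f (cone_rows X); pose c := \col_k cone_rhs (f k).
have MR : map_mx intr M = rowsub f (map_mx intr (cone_rows X)) :> 'M[R]_m.
  by apply/matrixP => k j; rewrite !mxE.
have {}Md : map_mx intr M *m d^T = map_mx intr c.
  by rewrite MR Md; apply/colP => k; rewrite !mxE.
have detM : 0 < (`|\det M|)%:~R :> R.
  by move: M_unit; rewrite -MR unitmxE unitfE det_map_mx intr_eq0 ltr0z normr_gt0.
exists (scaled_cramer M c); split.
  apply: cone_halfspace => x xX x0; rewrite (intvec_scaled_cramer Md) dotZl dotC.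
  by rewrite pmulr_rlt0 // (le_lt_trans (fd x xX x0)) ?ltrN10.
move=> j; apply: le_trans (sqrt_bound_le _ m0 D0).
apply: norm_scaled_cramer_le => [i l|k]; last by rewrite mxE cone_rhs_le1.
by rewrite mxE; apply: cone_rows_le.
Qed.
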